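(* (a) For every bracket pattern $w$, the set $\mathbb N_0\setminus A(w)$ is a submonoid of $(\mathbb N_0,+)$. (b) For every submonoid $M$ of $(\mathbb N_0,+)$ such that $\mathbb N_0\setminus M$ is finite, $A(\mathbb N_0\setminus M)=\mathbb N_0\setminus M$. In particular, a bracket pattern $w$ satisfies $w=A(w)$ if and only if $w=\mathbb N_0\setminus M$ for some submonoid $M$ of $(\mathbb N_0,+)$.
   Context: $\mathbb N=\{1,2,\dots\}$, $\mathbb N_0=\mathbb N\cup\{0\}$. A bracket pattern is a non-empty finite subset $w\subseteq\mathbb N$. For any finite subset $w\subseteq\mathbb N$ (in particular for bracket patterns), the completion is $A(w):=\{j-i\mid j\in w,\ i\in\mathbb N_0,\ i\notin w,\ i<j\}$ (so $A(\emptyset)=\emptyset$). A submonoid of $(\mathbb N_0,+)$ is a subset containing $0$ and closed under addition. *)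

From Stdlib Require Import Arith Lia.

Definition finite_set (w : nat -> Prop) : Prop :=
  exists n, forall x, w x -> x < n.

Definition bracket_pattern (w : nat -> Prop) : Prop :=
  (forall x, w x -> 0 < x) /\ (exists x, w x) /\ finite_set w.

Definition completion (w : nat -> Prop) (k : nat) : Prop :=
  exists j i, w j /\ ~ w i /\ i < j /\ k = j - i.

Definition submonoid (M : nat -> Prop) : Prop :=
  M 0 /\ forall a b, M a -> M b -> M (a + b).

(* If a + b = j - i with j in w and i not in w, then either i + a lies in w, so
   a = (i + a) - i is in A(w), or it does not, so b = j - (i + a) is in A(w);
   hence the complement of A(w) is closed under addition.  Conversely, for a
   submonoid M, a difference j - i with i in M and j outside M cannot lie in M,
   while every k outside M is k - 0. *)
From Stdlib Require Import Arith Lia Classical.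

Lemma completion_ext (w v : nat -> Prop) :
  (forall n, w n <-> v n) -> forall k, completion w k <-> completion v k.
Proof.
  intros Hwv k.
  split; intros (j & i & Hj & Hi & Hij & Hk); exists j, i; firstorder.
Qed.

Lemma submonoid_ext (M N : nat -> Prop) :
  (forall n, M n <-> N n) -> submonoid M -> submonoid N.
Proof.
  intros HMN [HM0 HMD].
  split; [apply HMN, HM0 |].
  intros a b Ha Hb; apply HMN, HMD; apply HMN; assumption.
Qed.

Lemma completion_pos (w : nat -> Prop) (k : nat) : completion w k -> 0 < k.
Proof. intros (j & i & _ & _ & Hij & Hk); lia. Qed.

Lemma submonoid_compl_completion (w : nat -> Prop) :
  submonoid (fun n => ~ completion w n).
Proof.
  split.
  - intros H0; apply completion_pos in H0; lia.
  - intros a b Ha Hb (j & i & Hj & Hi & Hij & Hk).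
    destruct (classic (w (i + a))) as [Hia | Hia].
    + apply Ha; exists (i + a), i; repeat split; try assumption; try lia.
      destruct a as [| a]; [rewrite Nat.add_0_r in Hia; contradiction | lia].
    + apply Hb; exists j, (i + a); repeat split; try assumption; try lia.
      destruct b as [| b]; [replace (i + a) with j in Hia by lia; contradiction | lia].
Qed.

Lemma completion_compl_submonoid (M : nat -> Prop) :
  submonoid M -> forall k, completion (fun n => ~ M n) k <-> ~ M k.
Proof.
  intros [HM0 HMD] k; split.
  - intros (j & i & Hj & Hi & Hij & Hk) HMk.
    apply NNPP in Hi; apply Hj.
    replace j with (i + k) by lia; auto.
  - intros HMk; exists k, 0; repeat split; auto; [| lia].
    destruct k as [| k]; [contradiction | lia].
Qed.

Theorem lemma7p13 :
  (* (a) *)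
  (forall w : nat -> Prop, bracket_pattern w ->
     submonoid (fun n => ~ completion w n)) /\
  (* (b) *)
  (forall M : nat -> Prop, submonoid M -> finite_set (fun n => ~ M n) ->
     forall k, completion (fun n => ~ M n) k <-> ~ M k) /\
  (* in particular *)
  (forall w : nat -> Prop, bracket_pattern w ->
     ((forall k, w k <-> completion w k) <->
      exists M : nat -> Prop, submonoid M /\ forall k, w k <-> ~ M k)).
Proof.
  split; [intros w _; apply submonoid_compl_completion |].
  split; [intros M HM _; apply completion_compl_submonoid, HM |].
  intros w _; split.
  - intros Hfix; exists (fun n => ~ w n); split.
    + apply (submonoid_ext (fun n => ~ completion w n));
        [firstorder | apply submonoid_compl_completion].
    + intros k; split; [tauto | apply NNPP].
  - intros (M & HM & HwM) k.
    rewrite (completion_ext w (fun n => ~ M n) HwM k).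
    rewrite (completion_compl_submonoid M HM k).
    apply HwM.
Qed.
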